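(* Let $G$ be a finite simple graph which is either bipartite or very well-covered, let $K$ be a field and $S=K[x_v : v\in V(G)]$. Then $\operatorname{reg}(S/NI(G))\geq \tau(G)$.
   Context: For a vertex $v$, $N_G[v]$ is the closed neighborhood of $v$ ($v$ together with its neighbors). The closed neighborhood ideal is $NI(G)=\big(\prod_{w\in N_G[v]} x_w : v\in V(G)\big)\subseteq S$. $\tau(G)$ is the minimum size of a vertex cover of $G$ (a set of vertices meeting every edge). A graph $G$ is very well-covered if it has no isolated vertices and every maximal independent set of $G$ has exactly $|V(G)|/2$ elements. $\operatorname{reg}$ denotes Castelnuovo–Mumford regularity; $K$ is an infinite field. *)

From mathcomp Require Import all_boot all_order all_algebra.
Set Implicit Arguments. Unset Strict Implicit. Unset Printing Implicit Defensive.
Import GRing.Theory.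

(* A finite simple graph on the vertex type T is given by an edge relation
   e : rel T which is symmetric and irreflexive; V(G) = T. *)
Section Graph.
Variable T : finType.
Variable e : rel T.

Definition simple_graph : Prop := symmetric e /\ irreflexive e.

Definition closed_nbhd (v : T) : {set T} := [set w | (w == v) || e v w].

Definition bipartite : Prop :=
  exists A : {set T}, forall x y, e x y -> (x \in A) != (y \in A).

Definition independent (S : {set T}) : bool :=
  [forall x in S, forall y in S, ~~ e x y].

Definition maximal_independent (S : {set T}) : bool :=
  independent S && [forall z, (z \notin S) ==> ~~ independent (z |: S)].

Definition very_well_covered : Prop :=
  (forall v, exists w, e v w) /\
  (forall S : {set T}, maximal_independent S -> #|S|.*2 = #|T|).

Definition vertex_cover (C : {set T}) : bool :=
  [forall x, forall y, e x y ==> (x \in C) || (y \in C)].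

(* tau(G): minimum size of a vertex cover (T itself is one) *)
Definition tau : nat := \big[minn/#|T|]_(C : {set T} | vertex_cover C) #|C|.

(* A monomial x^m (m : T -> nat) lies in the monomial ideal
   NI(G) = (prod_{w in N[v]} x_w : v in V) iff some generator divides it. *)
Definition in_NI (m : T -> nat) : bool :=
  [exists v, [forall w in closed_nbhd v, 0 < m w]].

(* Graded Betti numbers of S/NI(G) over K:
   beta_{i,j} = dim_K Tor_i^S(S/NI(G), K)_j, computed as the homology
   H_i(x; S/NI(G))_j of the Koszul complex on the variables tensored with
   S/NI(G).  The degree-j part of the i-th Koszul module has K-basis the
   pairs (m, F) with x^m a standard monomial (not in NI(G)) of degree j - i
   and F a set of i variables (e_F = wedge of e_k, k in F). *)
Definition koszul_pred (i j : nat) (x : {ffun T -> 'I_j.+1} * {set T}) : bool :=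
  [&& (\sum_v (x.1 v : nat)) + #|x.2| == j, #|x.2| == i
    & ~~ in_NI (fun v => (x.1 v : nat))].

Definition KB (i j : nat) := {x : {ffun T -> 'I_j.+1} * {set T} | @koszul_pred i j x}.

Variable K : fieldType.

Definition ksign (F : {set T}) (k : T) : K :=
  (-1)%R ^+ #|[set u in F | (enum_rank u < enum_rank k)%N]|.

(* Koszul differential: m (x) e_F |-> sum_{k in F} sign * (x_k m) (x) e_{F\k},
   where x_k m = 0 in S/NI(G) when it lies in NI(G) (no basis element). *)
Definition kentry (i j : nat) (a : KB i.+1 j) (b : KB i j) : K :=
  \sum_(k in (val a).2 | ((val b).2 == (val a).2 :\ k) &&
        [forall v, ((val b).1 v : nat) == ((val a).1 v : nat) + (v == k)])
    ksign (val a).2 k.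

(* matrix of d : K_{i+1,j} -> K_{i,j} (row-vector convention) *)
Definition kmat (i j : nat) : 'M[K]_(#|{: KB i.+1 j}|, #|{: KB i j}|) :=
  \matrix_(a, b) kentry (enum_val a) (enum_val b).

(* dim H_i = dim K_{i,j} - rank(d_i : K_i -> K_{i-1}) - rank(d_{i+1}) *)
Definition betti (i j : nat) : nat :=
  #|{: KB i j}| - (if i is i'.+1 then \rank (kmat i' j) else 0%N)
                - \rank (kmat i j).

(* reg(S/NI(G)) = max { j - i : betti i j <> 0 };  reg >= t  iff some
   nonzero betti i j has j - i >= t. *)
Definition reg_ge (t : nat) : Prop := exists i j : nat, betti i j <> 0%N /\ (t + i <= j)%N.

End Graph.

(* Let C be a vertex cover of G with a matching c |-> f c of C into the
   complement of C, and put U = C :|: f(C).  In the Koszul complex of S/NI(G)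
   the basis element x^C e_(U \ C), of bidegree (|C|, 2|C|), is a cycle: every
   neighbour of a vertex k of U \ C lies in C, so x_k x^C lies in NI(G).  It is
   not a boundary: the linear form sending x^(U \ F) e_F to a sign whenever F
   contains exactly one end of every matching edge, and every other basis
   element to 0, kills all boundaries (in the differential of a basis element
   only the two faces dropping an end of the one doubled matching edge
   survive, and the signs make them cancel), yet it is nonzero on our cycle.
   Hence beta_(|C|, 2|C|) <> 0 and reg(S/NI(G)) >= |C| >= tau(G).
   A bipartite graph has such a cover by Koenig's argument: Hall's condition
   holds from each side of a minimum cover into its complement.  In a very
   well-covered graph take C = ~: S for a maximal independent set S; Hall's
   condition for S into C holds because a minimal violator could be exchanged
   into a maximal independent set, making it larger than |V|/2. *)

From mathcomp Require Import all_boot all_order all_algebra.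
From mathcomp Require Import ring zify.
Set Implicit Arguments. Unset Strict Implicit. Unset Printing Implicit Defensive.
Import Order.TTheory GRing.Theory.

Section Algebra.
Local Open Scope ring_scope.

(* Splitting along the enumeration order avoids dividing by 2. *)
Lemma sum_alternating (I : finType) (V : zmodType) (f : I -> I -> V) :
  (forall k l, f l k = - f k l) -> (forall k, f k k = 0) ->
  \sum_k \sum_l f k l = 0.
Proof.
move=> f_anti f_diag.
pose g k l := if (enum_rank k < enum_rank l)%N then f k l else 0.
have fE k l : f k l = g k l - g l k.
  rewrite /g; case: ltngtP => [_|_|/val_inj/enum_rank_inj->].
  - by rewrite subr0.
  - by rewrite sub0r f_anti.
  - by rewrite f_diag subrr.
under eq_bigr => k _ do under eq_bigr => l _ do rewrite fE.
under eq_bigr => k _ do rewrite sumrB.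
by rewrite sumrB [X in _ - X]exchange_big subrr.
Qed.

Lemma sum_enum_val (I : finType) (V : zmodType) (F : I -> V) :
  \sum_(i < #|{: I}|) F (enum_val i) = \sum_i F i.
Proof. by rewrite -big_enum_val. Qed.

Lemma mxrank_add_ltn_cycle (K : fieldType) (n p q : nat)
    (A : 'M[K]_(p, n)) (B : 'M[K]_(n, q)) (z : 'rV[K]_n) (c : 'cV[K]_n) :
  A *m B = 0 -> z *m B = 0 -> A *m c = 0 -> z *m c != 0 ->
  (\rank A + \rank B < n)%N.
Proof.
move=> AB0 zB0 Ac0 zc_neq0.
have zA : ~~ (z <= A)%MS.
  by apply: contra zc_neq0 => /submxP[D ->]; rewrite -mulmxA Ac0 mulmx0.
have ltA : (A < A + z)%MS.
  by rewrite ltmxE addsmxSl; apply: contra zA; apply: submx_trans (addsmxSr _ _).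
have : (A + z <= kermx B)%MS by rewrite addsmx_sub; apply/andP; split; apply/sub_kermxP.
move/mxrankS; rewrite mxrank_ker; have := rank_ltmx ltA; lia.
Qed.

End Algebra.

Section KoszulComplex.
Variables (T : finType) (e : rel T) (K : fieldType).
Local Open Scope ring_scope.

Definition incr (m : T -> nat) (k : T) : T -> nat := fun v => (m v + (v == k))%N.

Definition kexp i j (b : KB e i j) : T -> nat := fun v => (val b).1 v.

Definition before (u w : T) : bool := (enum_rank u < enum_rank w)%N.

Lemma eq_in_NI (m m' : T -> nat) : m =1 m' -> in_NI e m = in_NI e m'.
Proof.
by move=> mm'; apply: eq_existsb => v; apply: eq_forallb => w; rewrite mm'.
Qed.

Lemma in_NI_le (m m' : T -> nat) :
  (forall v, m v <= m' v)%N -> in_NI e m -> in_NI e m'.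
Proof.
move=> le_mm' /existsP[v /forall_inP mv]; apply/existsP; exists v.
by apply/forall_inP => w /mv /leq_trans; apply.
Qed.

Lemma sum_kentry i j (a : KB e i.+1 j) (psi : (T -> nat) -> {set T} -> K) :
    (forall m m' F, m =1 m' -> psi m F = psi m' F) ->
    (forall m F, psi m F != 0 -> ~~ in_NI e m) ->
  \sum_(b : KB e i j) kentry K a b * psi (kexp b) (val b).2 =
  \sum_(k in (val a).2) ksign K (val a).2 k * psi (incr (kexp a) k) ((val a).2 :\ k).
Proof.
move=> psi_ext psi_NI; rewrite /kentry.
under eq_bigr => b _ do rewrite mulr_suml big_mkcondr.
rewrite exchange_big /=; apply: eq_bigr => k kF; rewrite -big_mkcond /=.
have [psi0|psi_neq0] := eqVneq (psi (incr (kexp a) k) ((val a).2 :\ k)) 0.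
  rewrite psi0 mulr0 big1 // => b /andP[/eqP Fb /forallP mb].
  by rewrite (psi_ext _ (incr (kexp a) k)) => [|v]; [rewrite Fb psi0 mulr0 | exact/eqP/mb].
case/and3P: (svalP a) => /eqP deg_a /eqP card_a _.
have ltj v : (incr (kexp a) k v < j.+1)%N.
  rewrite ltnS; apply: leq_trans (eq_leq deg_a); apply: leq_add.
    by rewrite (bigD1 v) ?leq_addr.
  by case: (v == k) => //; rewrite card_gt0; apply/set0Pn; exists k.
pose m0 : {ffun T -> 'I_j.+1} := [ffun v => Ordinal (ltj v)].
have kb0 : koszul_pred e i (m0, (val a).2 :\ k).
  have card_b : #|(val a).2 :\ k| = i by move: (cardsD1 k (val a).2); rewrite kF card_a => -[].
  rewrite /koszul_pred /= card_b eqxx (eq_in_NI (m' := incr (kexp a) k)); last first.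
    by move=> v; rewrite ffunE.
  rewrite (psi_NI _ _ psi_neq0) !andbT; apply/eqP; apply: etrans deg_a.
  rewrite card_a addnS -addSn; congr (_ + _)%N.
  under eq_bigr => v _ do rewrite ffunE /=.
  rewrite /incr /kexp big_split /= -[RHS]addn1; congr (_ + _)%N.
  by rewrite (bigD1 k) //= eqxx big1 // => v /negbTE ->.
pose b0 : KB e i j := exist _ (m0, (val a).2 :\ k) kb0.
rewrite (bigD1 b0) /=; last by rewrite eqxx; apply/forallP => v; rewrite ffunE.
rewrite big1 ?addr0 => [|b /andP[/andP[/eqP Fb /forallP mb] /eqP[]]].
  by rewrite (psi_ext _ (incr (kexp a) k)) // => v; rewrite /kexp /= ffunE.
apply: val_inj; case: b Fb mb => [[m F] _] /= -> mb; congr (_, _).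
by apply/ffunP => v; apply: val_inj; rewrite ffunE; exact/eqP/mb.
Qed.

Lemma before_swap (u w : T) : u != w -> before w u = ~~ before u w.
Proof.
move=> uw; rewrite /before; case: ltngtP => // /val_inj/enum_rank_inj wu.
by rewrite wu eqxx in uw.
Qed.

Lemma before_irr (u : T) : before u u = false.
Proof. exact: ltnn. Qed.

Lemma ksign_prod (F : {set T}) (k : T) :
  ksign K F k = \prod_(u in F) (-1) ^+ before u k.
Proof.
rewrite /ksign -prodr_const big_mkcond [RHS]big_mkcond /=.
by apply: eq_bigr => u _; rewrite inE /before; case: (u \in F); case: ltnP.
Qed.

Lemma ksign_setU1 (F : {set T}) (y k : T) :
  y \notin F -> ksign K (y |: F) k = (-1) ^+ before y k * ksign K F k.
Proof. by move=> yF; rewrite !ksign_prod big_setU1. Qed.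

Lemma ksignD1 (F : {set T}) (l k : T) :
  l \in F -> ksign K F k = (-1) ^+ before l k * ksign K (F :\ l) k.
Proof. by move=> lF; rewrite -ksign_setU1 ?setD11 // setD1K. Qed.

Lemma ksign_swap (F : {set T}) (k l : T) : k \in F -> l \in F -> k != l ->
  ksign K F l * ksign K (F :\ l) k = - (ksign K F k * ksign K (F :\ k) l).
Proof.
move=> kF lF kl; rewrite (ksignD1 l kF) (ksignD1 k lF) (before_swap kl) signrN.
by rewrite !mulNr opprK mulrAC.
Qed.

Lemma mulmx_kmat i j : kmat e K i.+1 j *m kmat e K i j = 0.
Proof.
apply/matrixP => a c; rewrite !mxE.
under eq_bigr => b _ do rewrite !mxE.
rewrite (sum_enum_val (fun b => kentry K (enum_val a) b * kentry K b (enum_val c))).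
set a' := enum_val a; set c' := enum_val c.
pose psi (m : T -> nat) (F : {set T}) := \sum_(l in F | ((val c').2 == F :\ l) &&
                   [forall v, (val c').1 v == incr m l v :> nat]) ksign K F l.
rewrite (@sum_kentry _ _ a' psi); first last.
- move=> m F; apply: contra => m_NI; apply/eqP; rewrite /psi big1 // => l.
  case/and3P=> _ _ /forallP c_eq; case/and3P: (svalP c') => _ _; case/negP.
  by apply: in_NI_le m_NI => v; rewrite (eqP (c_eq v)) leq_addr.
- by move=> m m' F mm'; apply: eq_bigl => l; under eq_forallb => v do rewrite /incr mm'.
set Fa := (val a').2.
(* f k l is the contribution of removing k, then l, from Fa. *)
pose f k l := if [&& k \in Fa, l \in Fa, k != l, (val c').2 == Fa :\ k :\ l &
                  [forall v, (val c').1 v == incr (incr (kexp a') k) l v :> nat]]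
              then ksign K Fa k * ksign K (Fa :\ k) l else 0.
have -> : \sum_(k in Fa) ksign K Fa k * psi (incr (kexp a') k) (Fa :\ k) =
          \sum_k \sum_l f k l.
  rewrite [RHS](bigID (mem Fa)) /= [X in _ + X]big1 ?addr0 => [|k /negbTE kF]; last first.
    by rewrite big1 // => l _; rewrite /f kF.
  apply: eq_bigr => k kF; rewrite /psi mulr_sumr big_mkcond /= big_mkcond /=.
  apply: eq_bigr => l _; rewrite /f kF !inE.
  by case: (eqVneq k l) => [<-|kl]; rewrite /= ?andbF ?andbT ?andbA.
apply: sum_alternating => [k l|k]; last by rewrite /f eqxx !andbF.
rewrite /f setDDl setUC -setDDl [l == k]eq_sym.
have -> : [forall v, (val c').1 v == incr (incr (kexp a') l) k v :> nat] =
          [forall v, (val c').1 v == incr (incr (kexp a') k) l v :> nat].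
  by apply: eq_forallb => v; rewrite /incr addnAC.
have [kF|] := boolP (k \in Fa); have [lF|] := boolP (l \in Fa); rewrite /= ?oppr0 //.
have [kl|] := boolP (k != l); rewrite /= ?oppr0 //.
by case: ifP => _; rewrite ?oppr0 // ksign_swap.
Qed.

Lemma kentry_cycle i j (b : KB e i.+1 j) (c : KB e i j) :
  (forall k, k \in (val b).2 -> in_NI e (incr (kexp b) k)) -> kentry K b c = 0.
Proof.
move=> b_cycle; rewrite /kentry big1 // => k /andP[kF /andP[_ /forallP c_eq]].
case/and3P: (svalP c) => _ _ /negP[]; apply: in_NI_le (b_cycle k kF) => v.
by rewrite (eqP (c_eq v)).
Qed.

(* The first hypothesis says that b is a cycle: multiplying its monomial by any
   x_k with k in its exterior part lands in NI(G). *)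
Lemma betti_neq0 i j (b : KB e i j) (psi : KB e i j -> K) :
    (forall k, k \in (val b).2 -> in_NI e (incr (kexp b) k)) ->
    (forall a : KB e i.+1 j, \sum_c kentry K a c * psi c = 0) ->
  psi b != 0 -> betti e K i j != 0%N.
Proof.
move=> b_cycle psi_cocycle psi_b.
pose z : 'rV[K]_#|{: KB e i j}| := delta_mx 0 (enum_rank b).
pose c : 'cV[K]_#|{: KB e i j}| := \col_l psi (enum_val l).
have Ac0 : kmat e K i j *m c = 0.
  apply/matrixP => a k; rewrite !mxE -[RHS](psi_cocycle (enum_val a)) -[RHS]sum_enum_val.
  by apply: eq_bigr => l _; rewrite !mxE.
have zc_neq0 : z *m c != 0.
  apply: contra psi_b => /eqP/matrixP/(_ 0 0); rewrite -rowE !mxE enum_rankK => ->.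
  exact: eqxx.
have zE : z = delta_mx 0 (enum_rank b) by [].
clearbody z c; rewrite /betti; case: i b b_cycle z zE c zc_neq0 Ac0 {psi_cocycle psi psi_b}.
  move=> _ _ z _ c zc_neq0 Ac0.
  have := @mxrank_add_ltn_cycle K _ _ 1 _ 0 z c (mulmx0 _ _) (mulmx0 _ _) Ac0 zc_neq0.
  by rewrite mxrank0; lia.
move=> i b b_cycle z zE c zc_neq0 Ac0.
have zB0 : z *m kmat e K i j = 0.
  by apply/rowP => k; rewrite zE -rowE !mxE enum_rankK kentry_cycle.
have := mxrank_add_ltn_cycle (mulmx_kmat i j) zB0 Ac0 zc_neq0; lia.
Qed.

End KoszulComplex.

(* The involution p of U encodes a perfect matching of G on U, and A contains
   exactly one end of each matching edge. *)
Section MatchingWitness.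
Variables (T : finType) (e : rel T) (K : fieldType).
Variables (U A : {set T}) (p : T -> T).
Hypothesis p_in : {in U, forall x, p x \in U}.
Hypothesis pK : {in U, involutive p}.
Hypothesis p_edge : {in U, forall x, e x (p x)}.
Hypothesis A_sub : A \subset U.
Hypothesis A_transversal : {in U, forall x, (x \in A) != (p x \in A)}.
Hypothesis A_cover : {in U :\: A, forall x w, e x w -> w \in A}.
Local Open Scope ring_scope.

Definition transversal (F : {set T}) : bool :=
  (F \subset U) && [forall x in U, (x \in F) != (p x \in F)].

Definition rep (u : T) : T := if u \in A then u else p u.

Definition inversion (u w : T) : bool := before (rep u) (rep w) && before w u.

(* The sign of the bijection rep : F -> A relative to the enumeration order. *)
Definition tsign (F : {set T}) : K :=
  \prod_(u in F) \prod_(w in F) (-1) ^+ inversion u w.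

Definition cocycle (m : T -> nat) (F : {set T}) : K :=
  if [forall v, m v == (v \in U :\: F)] && transversal F then tsign F else 0.

Lemma p_neq x : x \in U -> p x != x.
Proof. by move=> /A_transversal; apply: contra => /eqP ->. Qed.

Lemma rep_p x : x \in U -> rep (p x) = rep x.
Proof.
move=> xU; rewrite /rep; have := A_transversal xU.
by case: (x \in A); case: (p x \in A); rewrite // pK.
Qed.

Lemma rep_eq x y : x \in U -> y \in U -> rep x = rep y -> y = x \/ y = p x.
Proof.
move=> xU yU; rewrite /rep.
case: (x \in A); case: (y \in A) => xy; [left | right | right | left] => //.
- by rewrite xy pK.
- by rewrite -(pK yU) -xy pK.
Qed.

Lemma tsign_neq0 (F : {set T}) : tsign F != 0.
Proof. by apply/prodf_neq0 => u _; apply/prodf_neq0 => w _; rewrite signr_eq0. Qed.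

Lemma cocycle_ext (m m' : T -> nat) (F : {set T}) : m =1 m' -> cocycle m F = cocycle m' F.
Proof. by move=> mm'; rewrite /cocycle; under eq_forallb => v do rewrite mm'. Qed.

Lemma transversal_notin_NI (m : T -> nat) (F : {set T}) : transversal F ->
  (forall v, m v = (v \in U :\: F)) -> ~~ in_NI e m.
Proof.
case/andP=> FU /forall_inP F_tr mE; apply/existsP => -[v /forall_inP v_NI].
have v_nbhd w : w \in closed_nbhd e v -> w \in U :\: F.
  by move=> /v_NI; rewrite mE lt0b.
have /setDP[vU vF] : v \in U :\: F by apply: v_nbhd; rewrite inE eqxx.
have /setDP[_] : p v \in U :\: F by apply: v_nbhd; rewrite inE p_edge ?orbT.
by have := F_tr v vU; rewrite (negbTE vF) => /negPn ->.
Qed.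

Lemma cocycle_notin_NI (m : T -> nat) (F : {set T}) : cocycle m F != 0 -> ~~ in_NI e m.
Proof.
rewrite /cocycle; case: ifP => [/andP[/forallP mE F_tr] _|]; last by rewrite eqxx.
by apply: transversal_notin_NI F_tr _ => v; apply/eqP.
Qed.

Lemma transversalD1_p (F : {set T}) k : k \in U -> transversal (F :\ k) -> p k \in F :\ k.
Proof.
move=> kU /andP[_ /forall_inP F_tr]; have := F_tr k kU.
by rewrite setD11; case: (p k \in _).
Qed.

Lemma transversalD1_swap (F : {set T}) k : k \in U -> k \in F ->
  transversal (F :\ k) -> transversal (F :\ p k).
Proof.
move=> kU kF F_tr; have pkF := transversalD1_p kU F_tr.
have pk_neq := p_neq kU.
case/andP: F_tr => FU /forall_inP F_tr; apply/andP; split.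
  apply/subsetP => v /setD1P[_ vF]; have [-> //|vk] := eqVneq v k.
  by apply: (subsetP FU); rewrite !inE vk.
apply/forall_inP => x xU; have := F_tr x xU; rewrite !inE.
have [->|xk] := eqVneq x k; first by move=> _; rewrite [k == _]eq_sym pk_neq kF eqxx.
have [->|xpk] := eqVneq x (p k); first by move=> _; rewrite pK // [k == _]eq_sym pk_neq kF.
have pxk : p x != k by apply: contra xpk => /eqP <-; rewrite pK.
have pxpk : p x != p k by apply: contra xk => /eqP/(congr1 p); rewrite !pK // => ->.
by rewrite pxk pxpk.
Qed.

Lemma transversalD1_eq (F : {set T}) k l : k \in U -> k \in F -> l \in F ->
  transversal (F :\ k) -> transversal (F :\ l) -> l = k \/ l = p k.
Proof.
move=> kU kF lF Fk_tr /andP[_ /forall_inP Fl_tr].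
have /setD1P[pkk pkF] := transversalD1_p kU Fk_tr.
have [|lk] := eqVneq l k; first by left.
have [|lpk] := eqVneq l (p k); first by right.
by have := Fl_tr k kU; rewrite !inE [k == l]eq_sym lk kF [p k == l]eq_sym lpk pkF.
Qed.

Lemma incr_indicatorD1 (m : T -> nat) (F : {set T}) k : k \in F ->
  [forall v, incr m k v == (v \in U :\: (F :\ k))] =
  [forall v, m v == (v \in U :\: F)] && (k \in U).
Proof.
move=> kF; apply/forallP/andP => [m_eq | [/forallP m_eq kU] v].
  have := m_eq k; rewrite /incr !inE eqxx kF /= addn1.
  case: (k \in U) => //= /eqP[mk0]; split=> //; apply/forallP => v.
  have := m_eq v; rewrite /incr !inE; have [->|vk] := eqVneq v k; first by rewrite mk0 kF.
  by rewrite addn0.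
have := m_eq v; rewrite /incr !inE; have [->|vk] := eqVneq v k; last by rewrite addn0.
by rewrite kF kU => /eqP ->.
Qed.

Lemma inversion_irr (u : T) : inversion u u = false.
Proof. by rewrite /inversion before_irr. Qed.

Lemma tsign_setU1 (F : {set T}) y : y \notin F ->
  tsign (y |: F) = tsign F * \prod_(v in F) ((-1) ^+ inversion y v * (-1) ^+ inversion v y).
Proof.
move=> yF; rewrite /tsign big_setU1 //= big_setU1 //= inversion_irr mul1r.
under [X in _ * X = _]eq_bigr => u _ do rewrite big_setU1 //=.
by rewrite !big_split /=; ring.
Qed.

Lemma inversion_swap k v : k \in U -> v \in U -> v != k -> v != p k ->
  before v k (+) inversion (p k) v (+) inversion v (p k) =
  before v (p k) (+) inversion k v (+) inversion v k.
Proof.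
move=> kU vU vk vpk; rewrite /inversion rep_p //.
have rep_neq : rep v != rep k.
  by apply/eqP => /esym/(rep_eq kU vU)[]; apply/eqP.
rewrite (before_swap rep_neq) (before_swap vk) (before_swap vpk).
by case: before; case: before; case: before.
Qed.

Lemma ksign_tsign_swap (F : {set T}) k : F \subset U -> k \in F -> p k \in F ->
  ksign K F k * tsign (F :\ k) = - (ksign K F (p k) * tsign (F :\ p k)).
Proof.
move=> FU kF pkF; have kU := subsetP FU k kF.
have pk_neq := p_neq kU.
set G := F :\ k :\ p k.
have Fk : F :\ k = p k |: G by rewrite /G setD1K // !inE pk_neq.
have Fpk : F :\ p k = k |: G.
  have -> : G = F :\ p k :\ k by rewrite /G !setDDl setUC.
  by rewrite setD1K // !inE [k == _]eq_sym pk_neq.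
have kG : k \notin G by rewrite !inE eqxx andbF.
have pkG : p k \notin G by rewrite !inE eqxx.
rewrite [ksign K F k](ksignD1 K k pkF) [ksign K F (p k)](ksignD1 K (p k) kF) Fk Fpk.
rewrite !ksign_setU1 // !tsign_setU1 // !before_irr (before_swap pk_neq) signrN.
set s := (-1) ^+ before (p k) k.
set P1 := \prod_(v in G) ((-1) ^+ inversion (p k) v * _).
set P2 := \prod_(v in G) ((-1) ^+ inversion k v * _).
suff key : ksign K G k * P1 = ksign K G (p k) * P2.
  by transitivity (s * tsign G * (ksign K G k * P1)); [ring | rewrite key; ring].
rewrite !ksign_prod -!big_split; apply: eq_bigr => v vG /=.
have /setD1P[vpk /setD1P[vk vF]] := vG.
by rewrite -!signr_addb addbA inversion_swap ?(subsetP FU) // -addbA.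
Qed.

(* Only the two faces dropping an end of the matching edge contained in the
   exterior part survive, and ksign_tsign_swap makes them cancel. *)
Lemma cocycle_orth i j (a : KB e i.+1 j) :
  \sum_(b : KB e i j) kentry K a b * cocycle (kexp b) (val b).2 = 0.
Proof.
rewrite (@sum_kentry _ _ _ _ _ a cocycle); [|exact: cocycle_ext|exact: cocycle_notin_NI].
set F := (val a).2.
under eq_bigr => k kF do rewrite /cocycle incr_indicatorD1 //.
case: [forall v, _]; last by rewrite big1 // => k _; rewrite /= mulr0.
have [k0 /andP[k0F /andP[k0U Fk0_tr]] | no_k] :=
  pickP [pred k in F | (k \in U) && transversal (F :\ k)]; last first.
  by rewrite big1 // => k kF; have := no_k k; rewrite /= kF /= => ->; rewrite mulr0.
have /setD1P[pk0_neq pk0F] := transversalD1_p k0U Fk0_tr.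
have FU : F \subset U.
  apply/subsetP => v vF; have [-> //|vk0] := eqVneq v k0.
  by apply: (subsetP (andP Fk0_tr).1); rewrite !inE vk0.
rewrite (bigD1 k0) // (bigD1 (p k0)) /=; last by rewrite pk0F pk0_neq.
rewrite big1 ?addr0 => [|k /andP[/andP[kF kk0] kpk0]]; last first.
  case: ifP => [/andP[kU Fk_tr]|]; last by rewrite mulr0.
  by case: (transversalD1_eq k0U k0F kF Fk0_tr Fk_tr) => /eqP;
    rewrite ?(negbTE kk0) ?(negbTE kpk0).
rewrite k0U Fk0_tr p_in // transversalD1_swap //=.
by rewrite ksign_tsign_swap // addNr.
Qed.

Lemma card_setD_transversal : #|U :\: A| = #|A|.
Proof.
have -> : U :\: A = p @: A.
  apply/setP => x; rewrite !inE; apply/andP/imsetP => [[xA xU] | [a aA ->]].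
    exists (p x); last by rewrite pK.
    by have := A_transversal xU; rewrite (negbTE xA); case: (p x \in A).
  have aU := subsetP A_sub a aA.
  by split; [have := A_transversal aU; rewrite aA; case: (p x \in A) | exact: p_in].
apply: card_in_imset => a b aA bA pab.
by rewrite -(pK (subsetP A_sub a aA)) pab pK // (subsetP A_sub b bA).
Qed.

Lemma transversal_compl : transversal (U :\: A).
Proof.
apply/andP; split; first exact: subsetDl.
apply/forall_inP => x xU; rewrite !inE xU p_in // !andbT.
by have := A_transversal xU; case: (x \in A); case: (p x \in A).
Qed.

Lemma incr_indicator_in_NI (m : T -> nat) k : (forall v, m v = (v \in A)) ->
  k \in U :\: A -> in_NI e (incr m k).
Proof.
move=> mE kUA; apply/existsP; exists k; apply/forall_inP => w.
by rewrite inE /incr mE => /orP[/eqP-> | /(A_cover kUA) ->]; rewrite ?eqxx ?addn1.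
Qed.

Theorem reg_ge_matching : reg_ge e K #|A|.
Proof.
set h := #|A|.
have indicator_lt v : ((v \in A) < (h + h).+1)%N.
  case vA: (v \in A) => //; rewrite ltnS addn_gt0 orbb card_gt0.
  by apply/set0Pn; exists v.
pose m : {ffun T -> 'I_(h + h).+1} := [ffun v => Ordinal (indicator_lt v)].
have mE v : (m v : nat) = (v \in A) by rewrite ffunE.
have UUA v : (v \in U :\: (U :\: A)) = (v \in A).
  by rewrite !inE negb_and negbK; case vA: (v \in A); rewrite ?(subsetP A_sub v vA) ?andNb.
have b_kp : koszul_pred e h (m, U :\: A).
  have sum_m : (\sum_v (m v : nat))%N = h.
    rewrite -[RHS]sum1_card [RHS]big_mkcond /=; apply: eq_bigr => v _.
    by rewrite mE; case: (v \in A).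
  rewrite /koszul_pred /= card_setD_transversal sum_m !eqxx /=.
  by apply: (transversal_notin_NI transversal_compl) => v; rewrite mE UUA.
pose b : KB e h (h + h) := exist _ (m, U :\: A) b_kp.
exists h, (h + h)%N; split => //; apply/eqP.
apply: (betti_neq0 (b := b) (psi := fun c => cocycle (kexp c) (val c).2)).
- by move=> k; apply: incr_indicator_in_NI => v; rewrite /kexp mE.
- exact: cocycle_orth.
rewrite /cocycle /= transversal_compl andbT.
have -> : [forall v, kexp b v == (v \in U :\: (U :\: A))].
  by apply/forallP => v; rewrite /kexp /= mE UUA.
exact: tsign_neq0.
Qed.

End MatchingWitness.

Section Hall.
Variables (T : finType) (r : rel T).

Definition nbhd (Y Z : {set T}) : {set T} := [set y in Y | [exists x in Z, r x y]].

Definition hall_cond (Y X : {set T}) : Prop :=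
  forall Z : {set T}, Z \subset X -> #|Z| <= #|nbhd Y Z|.

Definition matching (Y X : {set T}) (f : T -> T) : Prop :=
  {in X &, injective f} /\ {in X, forall x, f x \in Y /\ r x (f x)}.

Lemma matching_sub (Y Y' X : {set T}) f :
  Y \subset Y' -> matching Y X f -> matching Y' X f.
Proof.
by move=> sYY' [f_inj fY]; split=> // x /fY[/(subsetP sYY') fxY' rxfx].
Qed.

Lemma matching_split (P X Y : {set T}) f1 f2 :
    matching Y (X :&: P) f1 -> matching Y (X :\: P) f2 ->
    {in X :&: P & X :\: P, forall x1 x2, f1 x1 != f2 x2} ->
  matching Y X (fun x => if x \in P then f1 x else f2 x).
Proof.
move=> [inj1 f1Y] [inj2 f2Y] f12.
have inXP x : x \in X -> x \in P -> x \in X :&: P by move=> xX xP; rewrite inE xX xP.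
have inXnP x : x \in X -> x \notin P -> x \in X :\: P by move=> xX xP; rewrite inE xX xP.
split=> [x x' xX x'X | x xX]; last first.
  by case: ifPn => [/(inXP x xX)|/(inXnP x xX)]; [apply: f1Y | apply: f2Y].
case: ifPn => [xP|xP]; case: ifPn => [x'P|x'P].
- exact: inj1 (inXP _ xX xP) (inXP _ x'X x'P).
- by move=> f_eq; have := f12 _ _ (inXP _ xX xP) (inXnP _ x'X x'P); rewrite f_eq eqxx.
- by move=> f_eq; have := f12 _ _ (inXP _ x'X x'P) (inXnP _ xX xP); rewrite f_eq eqxx.
- exact: inj2 (inXnP _ xX xP) (inXnP _ x'X x'P).
Qed.

Lemma hall_cond_sub (Y X X' : {set T}) :
  X' \subset X -> hall_cond Y X -> hall_cond Y X'.
Proof. by move=> sX'X hallX Z sZX'; apply/hallX/(subset_trans sZX'). Qed.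

Lemma hall_cond_tight (Y X Z0 : {set T}) : hall_cond Y X -> Z0 \subset X ->
  #|nbhd Y Z0| <= #|Z0| -> hall_cond (Y :\: nbhd Y Z0) (X :\: Z0).
Proof.
move=> hallX sZ0X tightZ0 W sW.
have disjWZ0 : [disjoint W & Z0].
  by apply/pred0P => x /=; apply/andP => -[/(subsetP sW)]; rewrite inE => /andP[/negP].
have := hallX (W :|: Z0); rewrite subUset sZ0X (subset_trans sW (subsetDl _ _)).
move=> /(_ isT); rewrite cardsU (disjoint_setI0 disjWZ0) cards0 subn0.
have sN : nbhd Y (W :|: Z0) :\: nbhd Y Z0 \subset nbhd (Y :\: nbhd Y Z0) W.
  apply/subsetP => y; rewrite !inE => /andP[nZ0 /andP[yY /exists_inP[x]]].
  rewrite inE => /orP[xW|xZ0] rxy; first by rewrite nZ0 yY; apply/exists_inP; exists x.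
  by move: nZ0; rewrite yY; case/negP; apply/exists_inP; exists x.
have := subset_leq_card sN; rewrite cardsD.
have : #|nbhd Y (W :|: Z0) :&: nbhd Y Z0| <= #|nbhd Y Z0| by apply/subset_leq_card/subsetIr.
lia.
Qed.

Lemma hall_cond_surplus (Y X : {set T}) x y : hall_cond Y X ->
    (forall Z : {set T}, Z \subset X -> Z != set0 -> Z != X -> #|Z| < #|nbhd Y Z|) ->
    x \in X -> y \in Y -> r x y ->
  hall_cond (Y :\ y) (X :\ x).
Proof.
move=> hallX surplus xX yY rxy W sW.
have [-> | W_neq0] := eqVneq W set0; first by rewrite cards0.
have sWX : W \subset X := subset_trans sW (subsetDl _ _).
have W_neqX : W != X by apply: contraTneq xX => <-; apply/negP => /(subsetP sW); rewrite !inE eqxx.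
have sN : nbhd Y W :\ y \subset nbhd (Y :\ y) W.
  by apply/subsetP => z; rewrite !inE => /andP[-> /andP[-> ->]].
have := subset_leq_card sN; have := surplus W sWX W_neq0 W_neqX.
have := cardsD1 y (nbhd Y W); case: (y \in nbhd Y W); lia.
Qed.

Theorem hall (X Y : {set T}) : hall_cond Y X -> exists f, matching Y X f.
Proof.
have [n ltXn] := ubnP #|X|; elim: n => // n IH in X Y ltXn *; move=> hallX.
have [X0 | [x xX]] := set_0Vmem X.
  by exists id; split=> [x y | x]; rewrite X0 inE.
have [/existsP[Z0 /and4P[sZ0X Z0_neq0 Z0_neqX tightZ0]] | no_tight] :=
  boolP [exists Z0 : {set T}, [&& Z0 \subset X, Z0 != set0, Z0 != X & #|nbhd Y Z0| <= #|Z0|]].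
  have ltZ0X : #|Z0| < #|X| by apply: proper_card; rewrite properEneq Z0_neqX.
  have [f1 match1] := IH Z0 Y (leq_trans ltZ0X ltXn) (hall_cond_sub sZ0X hallX).
  have ltXZ0 : #|X :\: Z0| < #|X|.
    rewrite cardsD (setIidPr sZ0X); have := subset_leq_card sZ0X.
    by move: Z0_neq0; rewrite -card_gt0; lia.
  have [f2 match2] := IH _ _ (leq_trans ltXZ0 ltXn) (hall_cond_tight hallX sZ0X tightZ0).
  exists (fun x => if x \in Z0 then f1 x else f2 x); apply: matching_split.
  - by rewrite (setIidPr sZ0X).
  - exact: matching_sub (subsetDl _ _) match2.
  move=> x1 x2; rewrite (setIidPr sZ0X) => x1Z0 x2X.
  have [/setDP[_ f2x2N] _] := match2.2 x2 x2X; apply: contraNneq f2x2N => <-.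
  by have [f1x1Y rx1] := match1.2 x1 x1Z0; rewrite inE f1x1Y; apply/exists_inP; exists x1.
have surplus (Z : {set T}) : Z \subset X -> Z != set0 -> Z != X -> #|Z| < #|nbhd Y Z|.
  move=> sZX Z_neq0 Z_neqX; rewrite ltnNge; apply: contraNN no_tight => tightZ.
  by apply/existsP; exists Z; rewrite sZX Z_neq0 Z_neqX.
have /card_gt0P[y] : 0 < #|nbhd Y [set x]|.
  by apply: leq_trans (hallX _ _); rewrite ?cards1 ?sub1set.
rewrite inE => /andP[yY /exists_inP[_ /set1P-> rxy]].
have ltXx : #|X :\ x| < #|X| by rewrite (cardsD1 x X) xX.
have [f' match'] := IH _ _ (leq_trans ltXx ltXn) (hall_cond_surplus hallX surplus xX yY rxy).
exists (fun z => if z \in [set x] then y else f' z); apply: matching_split => //.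
- rewrite (setIidPr _) ?sub1set //; split=> [? ? /set1P-> /set1P-> // | ? /set1P->].
  by split.
- exact: matching_sub (subsetDl _ _) match'.
by move=> _ x2 _ x2X; have [/setD1P[f'y _] _] := match'.2 x2 x2X; rewrite eq_sym.
Qed.

Lemma minimal_violator_nbhd (X Y J : {set T}) :
    (forall Z : {set T}, Z \subset Y -> #|Z| < #|Y| -> #|Z| <= #|nbhd X Z|) ->
    #|nbhd X Y| < #|Y| -> J \subset nbhd X Y -> J != set0 ->
  #|J| < #|[set y in Y | [exists j in J, r y j]]|.
Proof.
move=> hall_lt ltNY sJN J_neq0; set Q := [set y in Y | _].
have sQY : Q \subset Y by apply/subsetP => y /setIdP[].
have Q_gt0 : 0 < #|Q|.
  have /set0Pn[j jJ] := J_neq0; have /setIdP[_ /exists_inP[y yY ryj]] := subsetP sJN j jJ.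
  by apply/card_gt0P; exists y; rewrite inE yY; apply/exists_inP; exists j.
have sN : nbhd X (Y :\: Q) \subset nbhd X Y :\: J.
  apply/subsetP => z /setIdP[zX /exists_inP[y /setDP[yY yQ] ryz]].
  rewrite !inE zX /=; apply/andP; split.
    by apply: contraNN yQ => zJ; rewrite inE yY; apply/exists_inP; exists z.
  by apply/exists_inP; exists y.
have := hall_lt _ (subsetDl Y Q); rewrite cardsD (setIidPr sQY).
have := subset_leq_card sN; rewrite cardsD (setIidPr sJN).
have := subset_leq_card sQY; have := subset_leq_card sJN.
lia.
Qed.

End Hall.

Lemma imset_inverse (T : finType) (f : T -> T) (X : {set T}) :
  exists g, {in f @: X, forall y, g y \in X /\ f (g y) = y}.
Proof.
exists (fun y => odflt y [pick x in X | f x == y]) => _ /imsetP[x xX ->].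
by case: pickP => [x' /andP[x'X /eqP] | /(_ x)] //=; rewrite xX eqxx.
Qed.

Section CoverMatching.
Variables (T : finType) (e : rel T) (K : fieldType).
Hypothesis e_sym : symmetric e.

Lemma tau_le_cover (C : {set T}) : vertex_cover e C -> tau e <= #|C|.
Proof.
move=> C_cover; have := @bigmin_le_cond _ nat _ #|T| C _ (fun C => #|C|) C_cover.
by rewrite minEnat.
Qed.

Lemma reg_ge_le t t' : reg_ge e K t -> t' <= t -> reg_ge e K t'.
Proof.
by move=> [i [j [betti_ij le_tj]]] le_t't; exists i, j; split=> //; lia.
Qed.

Lemma cover_matching_reg (C : {set T}) f :
  vertex_cover e C -> matching e (~: C) C f -> reg_ge e K (tau e).
Proof.
move=> C_cover [f_inj fC]; apply: reg_ge_le (tau_le_cover C_cover).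
have [g gK] := imset_inverse f C.
pose U := C :|: f @: C; pose p x := if x \in C then f x else g x.
have fCC c : c \in C -> f c \notin C by move=> /fC[]; rewrite inE.
have pC x : x \in U -> x \notin C -> p x \in C /\ f (p x) = x.
  by rewrite /p !inE => /orP[-> // | /gK] /[swap] /negbTE ->.
have p_in x : x \in U -> p x \in U.
  move=> xU; case xC: (x \in C); last by rewrite inE (pC x xU (negbT xC)).1.
  by rewrite /p xC inE imset_f ?orbT.
apply: (@reg_ge_matching _ _ _ U C p p_in).
- move=> x xU; case xC: (x \in C); last first.
    by have [pxC fpx] := pC x xU (negbT xC); rewrite {1}/p pxC.
  have fxfC : f x \in f @: C by apply: imset_f.
  by rewrite /p xC (negbTE (fCC x xC)); apply: f_inj (gK _ fxfC).1 xC (gK _ fxfC).2.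
- move=> x xU; case xC: (x \in C); first by rewrite /p xC; case: (fC x xC).
  by have [pxC fpx] := pC x xU (negbT xC); rewrite e_sym -{2}fpx; case: (fC _ pxC).
- exact: subsetUl.
- move=> x xU; case xC: (x \in C); first by rewrite /p xC (negbTE (fCC x xC)).
  by rewrite (pC x xU (negbT xC)).1.
move=> x /setDP[_ xC] w exw; have := forallP (forallP C_cover x) w.
by rewrite exw (negbTE xC).
Qed.

End CoverMatching.

Section Independence.
Variables (T : finType) (e : rel T).
Hypothesis e_sym : symmetric e.

Lemma independentP (S : {set T}) :
  reflect {in S &, forall x y, ~~ e x y} (independent e S).
Proof.
apply: (iffP forall_inP) => [S_indep x y xS | S_indep x xS].
  exact: (forall_inP (S_indep x xS)).
by apply/forall_inP => y; apply: S_indep.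
Qed.

Lemma independent_compl_cover (S : {set T}) : independent e S -> vertex_cover e (~: S).
Proof.
move=> /independentP S_indep; apply/forallP => x; apply/forallP => y; apply/implyP => exy.
by rewrite !inE -negb_and; apply: contraL exy => /andP[xS yS]; apply: S_indep.
Qed.

Lemma extend_maximal (I : {set T}) :
  independent e I -> exists2 M : {set T}, I \subset M & maximal_independent e M.
Proof.
move=> I_indep.
have [|M /andP[M_indep sIM] M_max] :=
  @arg_maxnP _ I [pred M : {set T} | independent e M && (I \subset M)] (fun M => #|M|).
  by rewrite /= I_indep subxx.
exists M => //; rewrite /maximal_independent M_indep.
apply/forall_inP => z zM; apply/negP => zM_indep.
have := M_max (z |: M); rewrite /= zM_indep (subset_trans sIM (subsetUr _ _)) cardsU1 zM.
by move=> /(_ isT); rewrite add1n ltnn.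
Qed.

Lemma independent_exchange (S M Y : {set T}) :
    independent e S -> independent e M -> Y \subset S ->
  independent e ((M :\: nbhd e (~: S) Y) :|: Y).
Proof.
move=> /independentP S_indep /independentP M_indep sYS.
have cross a b : a \in M :\: nbhd e (~: S) Y -> b \in Y -> ~~ e b a.
  case/setDP=> aM aN bY; apply: contraNN aN => eba.
  have aS : a \notin S by apply: contraTN eba => aS; apply: S_indep => //; apply: (subsetP sYS).
  by rewrite !inE aS; apply/exists_inP; exists b.
apply/independentP => a b; rewrite !in_setU => /orP[aM|aY] /orP[bM|bY].
- by apply: M_indep; [case/setDP: aM | case/setDP: bM].
- by rewrite e_sym; apply: cross.
- exact: cross.
- by apply: S_indep; apply: (subsetP sYS).
Qed.

End Independence.

Section Bipartite.
Variables (T : finType) (e : rel T) (K : fieldType).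
Hypothesis e_sym : symmetric e.

(* Otherwise (C :\: Z) :|: nbhd (~: C) Z would be a smaller cover. *)
Lemma min_cover_hall (C S : {set T}) : vertex_cover e C ->
    (forall C' : {set T}, vertex_cover e C' -> #|C| <= #|C'|) ->
    S \subset C -> independent e S ->
  hall_cond e (~: C) S.
Proof.
move=> C_cover C_min sSC /independentP S_indep Z sZS.
have sZC : Z \subset C := subset_trans sZS sSC.
pose C' := (C :\: Z) :|: nbhd e (~: C) Z.
have nbhd_Z x y : e x y -> x \in Z -> y \in C'.
  move=> exy xZ; rewrite !inE; case: (y \in C); rewrite /= ?andbT ?andbF ?orbF.
    by apply: contraTN exy => yZ; apply: S_indep; apply: (subsetP sZS).
  by apply/exists_inP; exists x.
have C'_cover : vertex_cover e C'.
  apply/forallP => x; apply/forallP => y; apply/implyP => exy.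
  case xZ: (x \in Z); first by rewrite (nbhd_Z x y exy xZ) orbT.
  case yZ: (y \in Z); first by rewrite (nbhd_Z y x _ yZ) // e_sym.
  have /orP[xC|yC] := implyP (forallP (forallP C_cover x) y) exy.
    by rewrite !inE xZ xC.
  by rewrite !inE yZ yC orbT.
have := C_min C' C'_cover; have := subset_leq_card sZC.
rewrite cardsU cardsD (setIidPr sZC); lia.
Qed.

Lemma bipartite_reg : bipartite e -> reg_ge e K (tau e).
Proof.
case=> P P_bip.
have [|C C_cover C_min] := arg_minnP (fun C : {set T} => #|C|) (_ : vertex_cover e setT).
  by apply/forallP => x; apply/forallP => y; rewrite in_setT implybT.
have side_indep (S : {set T}) b : {in S, forall x, (x \in P) = b} -> independent e S.
  move=> Sb; apply/independentP => x y xS yS; apply/negP => /P_bip.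
  by rewrite !Sb ?eqxx.
have [f1 match1] : exists f, matching e (~: C) (C :&: P) f.
  apply/hall/min_cover_hall/(side_indep _ true) => //; first exact: subsetIl.
  by move=> x /setIP[].
have [f2 match2] : exists f, matching e (~: C) (C :\: P) f.
  apply/hall/min_cover_hall/(side_indep _ false) => //; first exact: subsetDl.
  by move=> x /setDP[_ /negbTE].
apply: (cover_matching_reg K e_sym C_cover (matching_split match1 match2 _)).
move=> x1 x2 x1CP x2CP; have [_ x1P] := setIP x1CP; have [_ x2P] := setDP x2CP.
have := P_bip _ _ (match1.2 x1 x1CP).2; have := P_bip _ _ (match2.2 x2 x2CP).2.
rewrite x1P (negbTE x2P) => f2P f1P; apply/eqP => f12.
by move: f1P f2P; rewrite f12; case: (_ \in P).
Qed.

End Bipartite.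

Section VeryWellCovered.
Variables (T : finType) (e : rel T) (K : fieldType).
Hypothesis e_sym : symmetric e.
Hypothesis e_irr : irreflexive e.
Hypothesis vwc : very_well_covered e.

Lemma vwc_independent_card (I : {set T}) : independent e I -> #|I|.*2 <= #|T|.
Proof.
move=> /extend_maximal[M sIM /vwc.2 <-]; rewrite leq_double; exact: subset_leq_card.
Qed.

Section MaximalIndependent.
Variable S : {set T}.
Hypothesis S_max : maximal_independent e S.

(* If Y violates Hall's condition minimally, exchanging J = M :&: nbhd Y for Y
   in a maximal independent set M meeting nbhd Y yields an independent set
   larger than M, i.e. larger than |V|/2. *)
Lemma vwc_hall_step (Y : {set T}) : Y \subset S ->
    (forall Z : {set T}, Z \subset Y -> #|Z| < #|Y| -> #|Z| <= #|nbhd e (~: S) Z|) ->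
  #|Y| <= #|nbhd e (~: S) Y|.
Proof.
have /andP[/independentP S_indep _] := S_max.
move=> sYS hall_lt; set N := nbhd e (~: S); rewrite leqNgt; apply/negP => ltNY.
have [y0 y0Y] : exists y0, y0 \in Y by apply/card_gt0P; lia.
have [w ew] := vwc.1 y0.
have wN : w \in N Y.
  rewrite !inE; apply/andP; split; last by apply/exists_inP; exists y0.
  by apply: contraTN ew => wS; apply: S_indep => //; apply: (subsetP sYS).
have w_indep : independent e [set w].
  by apply/independentP => x y /set1P-> /set1P->; rewrite e_irr.
have [M wM M_max] := extend_maximal w_indep.
have /andP[M_indep _] := M_max.
set J := M :&: N Y.
pose Q := [set x in Y | [exists j in J, e x j]].
have sQY : Q \subset Y by apply/subsetP => x /setIdP[].
have ltJQ : #|J| < #|Q|.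
  apply: minimal_violator_nbhd hall_lt ltNY (subsetIr _ _) _.
  by apply/set0Pn; exists w; rewrite inE wN (subsetP wM) ?set11.
have disjMQ : [disjoint M :\: N Y & Q].
  apply/pred0P => x /=; apply/andP => -[/setDP[xM _] /setIdP[_ /exists_inP[j /setIP[jM _] exj]]].
  by move/independentP: M_indep => /(_ x j xM jM); rewrite exj.
have := subset_leq_card (setUS (M :\: N Y) sQY).
rewrite cardsU (disjoint_setI0 disjMQ) cards0 subn0 cardsD -/J.
have := vwc_independent_card (independent_exchange e_sym (andP S_max).1 M_indep sYS); rewrite -/N.
have := vwc.2 M M_max; have : #|J| <= #|M| by apply/subset_leq_card/subsetIl.
lia.
Qed.

Lemma vwc_hall : hall_cond e (~: S) S.
Proof.
move=> Y; have [n ltYn] := ubnP #|Y|; elim: n => // n IH in Y ltYn *; move=> sYS.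
apply: (vwc_hall_step sYS) => Z sZY ltZY; apply: IH; first exact: leq_trans ltZY _.
exact: subset_trans sZY sYS.
Qed.

End MaximalIndependent.

Lemma vwc_reg : reg_ge e K (tau e).
Proof.
have set0_indep : independent e set0 by apply/independentP => x y; rewrite inE.
have [S _ S_max] := extend_maximal set0_indep.
have [g [g_inj gS]] := hall (vwc_hall S_max).
have gSC : g @: S = ~: S.
  apply/eqP; rewrite eqEcard card_in_imset // cardsCs setCK.
  apply/andP; split; last by have := vwc.2 S S_max; lia.
  by apply/subsetP => _ /imsetP[x xS ->]; case: (gS x xS).
have [f fK] := imset_inverse g S; rewrite gSC in fK.
apply: (cover_matching_reg K e_sym (independent_compl_cover (andP S_max).1) (f := f)).
rewrite setCK; split=> [c c' cC c'C fcc' | c cC].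
  by rewrite -(fK c cC).2 -(fK c' c'C).2 fcc'.
have [fcS gfc] := fK c cC; split=> //.
by have := (gS _ fcS).2; rewrite gfc e_sym.
Qed.

End VeryWellCovered.

Theorem proposition3p4 (T : finType) (e : rel T) (K : fieldType) :
  simple_graph e -> (bipartite e \/ very_well_covered e) ->
  reg_ge e K (tau e).
Proof.
by case=> e_sym e_irr [bip | vwc]; [exact: bipartite_reg | exact: vwc_reg].
Qed.
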